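(* Let $E$ be an extension of $\mathbb{Z}_\mathrm{max}$ and let $n$ be a positive integer. Then there is at most one subextension $L$ of $E$ (a subsemifield of $E$ containing the image of $\mathbb{Z}_\mathrm{max}$) such that $\mathrm{ui}(L/\mathbb{Z}_\mathrm{max})=n$.
   Context: A semifield is a commutative semiring in which every nonzero element is a unit. $\mathbb{Z}_\mathrm{max}=\mathbb{Z}\cup\{-\infty\}$ is the semifield with addition $\max$ and multiplication ordinary addition. An extension of a semifield $K$ is a semifield $E$ with an injective homomorphism $K\to E$. The unit index is $\mathrm{ui}(L/K)=|L^\times/K^\times|$. *)

From HB Require Import structures.
From mathcomp Require Import all_boot all_order all_algebra.
Set Implicit Arguments. Unset Strict Implicit. Unset Printing Implicit Defensive.
Import Order.TTheory GRing.Theory Num.Theory.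
Local Open Scope ring_scope.

(* -oo is represented by None, an integer k by Some k.                 *)
Definition Zmax := option int.
HB.instance Definition _ := Choice.on Zmax.

Definition zmax_add (x y : Zmax) : Zmax :=
  match x, y with
  | None, _ => y
  | _, None => x
  | Some a, Some b => Some (Num.max a b)
  end.

Definition zmax_mul (x y : Zmax) : Zmax :=
  match x, y with
  | Some a, Some b => Some (a + b)
  | _, _ => None
  end.

Lemma zmax_addA : associative zmax_add.
Proof. by case=> [a|] [b|] [c|] //=; rewrite maxA. Qed.
Lemma zmax_addC : commutative zmax_add.
Proof. by case=> [a|] [b|] //=; rewrite maxC. Qed.
Lemma zmax_add0 : left_id (None : Zmax) zmax_add.
Proof. by case. Qed.

HB.instance Definition _ := GRing.isNmodule.Build Zmax zmax_addA zmax_addC zmax_add0.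

Lemma zmax_mulA : associative zmax_mul.
Proof. by case=> [a|] [b|] [c|] //=; rewrite addrA. Qed.
Lemma zmax_mulC : commutative zmax_mul.
Proof. by case=> [a|] [b|] //=; rewrite addrC. Qed.
Lemma zmax_mul1 : left_id (Some 0 : Zmax) zmax_mul.
Proof. by case=> [a|] //=; rewrite add0r. Qed.
Lemma zmax_mulDl : left_distributive zmax_mul zmax_add.
Proof. by case=> [a|] [b|] [c|] //=; rewrite addr_maxl. Qed.
Lemma zmax_mul0 : left_zero (None : Zmax) zmax_mul.
Proof. by []. Qed.
Lemma zmax_one_neq0 : (Some 0 : Zmax) != None.
Proof. by []. Qed.

HB.instance Definition _ := GRing.Nmodule_isComNzSemiRing.Build Zmax
  zmax_mulA zmax_mulC zmax_mul1 zmax_mulDl zmax_mul0 zmax_one_neq0.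

Definition is_semifield (K : comNzSemiRingType) : Prop :=
  forall x : K, x != 0 -> exists y : K, x * y = 1.

Definition is_subsemifield (E : comNzSemiRingType) (L : E -> Prop) : Prop :=
  [/\ L 0, L 1,
      (forall x y, L x -> L y -> L (x + y)),
      (forall x y, L x -> L y -> L (x * y)) &
      (forall x, L x -> x != 0 -> exists2 y, L y & x * y = 1)].

Definition is_subextension (E : comNzSemiRingType) (f : {rmorphism Zmax -> E})
    (L : E -> Prop) : Prop :=
  is_subsemifield L /\ (forall z : Zmax, L (f z)).

(* Two units x, y of L are in the same coset of f(Zmax^x) = f(Z) in L^x
   iff x = y * f(k) for some integer k. *)
Definition same_coset (E : comNzSemiRingType) (f : {rmorphism Zmax -> E})
    (x y : E) : Prop :=
  exists k : int, x = y * f (Some k).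

(* ui(L/Zmax) = n, i.e. the group L^x / f(Zmax^x) has exactly n elements:
   there are n pairwise distinct cosets r_0, ..., r_{n-1} of units of L
   which cover all of L^x. *)
Definition unit_index_eq (E : comNzSemiRingType) (f : {rmorphism Zmax -> E})
    (L : E -> Prop) (n : nat) : Prop :=
  exists r : 'I_n -> E,
    [/\ (forall i, L (r i) /\ r i != 0),
        (forall i j, same_coset f (r i) (r j) -> i = j) &
        (forall x, L x -> x != 0 -> exists i, same_coset f x (r i))].

(* The unit group of an extension of Z_max has no torsion: since 1 + 1 = 1,
   a unit z with z^n = 1 fixes the nonzero element 1 + z + ... + z^(n-1),
   so z = 1, and n-th roots of units are unique.  If ui(L/Z_max) = n, then
   multiplication by a unit x permutes the n cosets, so x^n lies in the image
   t^Z of Z, where t is the image of 1; the exponents of the n-th powers of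
   the coset representatives are pairwise incongruent mod n, so one of them
   yields an n-th root of t in L.  Hence L consists of 0 and exactly the
   units whose n-th power lies in t^Z, a description independent of L. *)

From HB Require Import structures.
From mathcomp Require Import all_boot all_order all_algebra.
Import GRing.Theory.
Local Open Scope ring_scope.
Set Implicit Arguments.
Unset Strict Implicit.

Section IdempotentSemifield.

Variable E : comNzSemiRingType.
Hypothesis hE : is_semifield E.
Hypothesis one_add_one : 1 + 1 = 1 :> E.

Lemma addrr_id (x : E) : x + x = x.
Proof. by rewrite -{1 2}(mulr1 x) -mulrDr one_add_one mulr1. Qed.

Lemma addr_eq0_l (a b : E) : a + b = 0 -> a = 0.
Proof.
move=> ab0; have : a + (a + b) = a by rewrite ab0 addr0.
by rewrite addrA addrr_id ab0.
Qed.

Lemma semifield_mul_neq0 (a b : E) : a != 0 -> b != 0 -> a * b != 0.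
Proof.
move=> a0 b0; apply/eqP => ab0; have [c ac] := hE a0.
by move/eqP: b0; apply; rewrite -[b]mul1r -ac mulrAC ab0 mul0r.
Qed.

Lemma semifield_mulI (a b c : E) : a != 0 -> a * b = a * c -> b = c.
Proof.
move=> a0 abc; have [d ad] := hE a0.
by rewrite -[b]mul1r -[c]mul1r -ad mulrAC abc mulrAC.
Qed.

Lemma expr_eq1 (z : E) (n : nat) : (0 < n)%N -> z ^+ n = 1 -> z = 1.
Proof.
case: n => // m _ zn1.
set w := \sum_(i < m.+1) z ^+ i.
have w_def : w = 1 + \sum_(i < m) z ^+ i.+1 by rewrite /w big_ord_recl expr0.
have zw : z * w = w.
  rewrite {2}w_def /w mulr_sumr big_ord_recr /= -exprS zn1 addrC.
  by congr (_ + _); apply: eq_bigr => i _; rewrite exprS.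
have w_neq0 : w != 0 by apply/eqP; rewrite w_def => /addr_eq0_l/eqP; rewrite oner_eq0.
by apply: (semifield_mulI w_neq0); rewrite mulrC zw mulr1.
Qed.

Lemma expr_inj (x y : E) (n : nat) :
  (0 < n)%N -> y != 0 -> x ^+ n = y ^+ n -> x = y.
Proof.
move=> n_gt0 y0 xyn; have [y' yy'] := hE y0.
have /(expr_eq1 n_gt0) xy'1 : (x * y') ^+ n = 1.
  by rewrite exprMn xyn -exprMn yy' expr1n.
by rewrite -[x]mulr1 -yy' mulrCA xy'1 mulr1.
Qed.

End IdempotentSemifield.

Section Residues.

Variable n : nat.
Hypothesis n_gt0 : (0 < n)%N.

Definition residue (k : int) : nat := `|(k %% n)%Z|%N.

Lemma modzn_ge0 (k : int) : 0 <= (k %% n)%Z.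
Proof. by apply: modz_ge0; rewrite eqz_nat -lt0n. Qed.

Lemma residue_lt (k : int) : (residue k < n)%N.
Proof. by rewrite -ltz_nat gez0_abs ?modzn_ge0 // ltz_pmod. Qed.

Lemma residue_divz_eq (k : int) : k = (k %/ n)%Z * n + (residue k)%:Z.
Proof. by rewrite gez0_abs ?modzn_ge0 // -divz_eq. Qed.

Lemma residue_eq_dvd (a b : int) :
  residue a = residue b -> exists q : int, a = b + q * n.
Proof.
move=> /(congr1 Posz); rewrite !gez0_abs ?modzn_ge0 // => /eqP.
by rewrite eqz_mod_dvd => /dvdzP [q abq]; exists q; rewrite -abq addrC subrK.
Qed.

End Residues.

Section ZmaxExtension.

Variables (E : comNzSemiRingType) (f : {rmorphism Zmax -> E}).

Lemma Zmax_one_add_one : 1 + 1 = 1 :> E.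
Proof. by rewrite -(rmorph1 f) -rmorphD. Qed.

Lemma rmorph_SomeD (a b : int) : f (Some (a + b)) = f (Some a) * f (Some b).
Proof. by rewrite -rmorphM. Qed.

Lemma rmorph_SomeX (a : int) (m : nat) : f (Some a) ^+ m = f (Some (a * m%:Z)).
Proof.
elim: m => [|m IHm]; first by rewrite expr0 mulr0 rmorph1.
by rewrite exprS IHm -rmorph_SomeD intS mulrDr mulr1.
Qed.

Lemma rmorph_Some_neq0 (a : int) : f (Some a) != 0.
Proof.
apply/eqP => fa0; have := rmorph_SomeD a (- a).
by rewrite subrr rmorph1 fa0 mul0r => /eqP; rewrite oner_eq0.
Qed.

Section UnitIndex.

Hypothesis hE : is_semifield E.
Variables (n : nat) (L : E -> Prop).
Hypotheses (hL : is_subextension f L) (hU : unit_index_eq f L n).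

Lemma subextension_exprM (s : E) (m : nat) (q : int) :
  L s -> L (s ^+ m * f (Some q)).
Proof.
case: hL => [[_ L1 _ LM _] Lf] Ls; apply: (LM _ _ _ (Lf _)).
by elim: m => [|m IHm]; rewrite ?expr0 // exprS; apply: LM.
Qed.

Lemma unit_index_expr_image (x : E) :
  L x -> x != 0 -> exists k : int, x ^+ n = f (Some k).
Proof.
case: hL => [[_ _ _ LM _] _]; case: hU => r [hr r_inj r_cover] Lx x0.
have /fin_all_exists [g xrg] :
    forall i, exists p : 'I_n * int, x * r i = r p.1 * f (Some p.2).
  move=> i; have [Lri ri0] := hr i.
  have [j [k xrk]] := r_cover _ (LM _ _ Lx Lri) (semifield_mul_neq0 hE x0 ri0).
  by exists (j, k).
have g_inj : injective (fun i => (g i).1).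
  move=> i j gij; apply: r_inj; exists ((g i).2 - (g j).2).
  apply: (semifield_mulI hE x0).
  apply: (semifield_mulI hE (rmorph_Some_neq0 (g j).2)).
  rewrite xrg (mulrA x) xrg gij -(mulrA (r _)) -rmorph_SomeD.
  by rewrite (addrC (g j).2) subrK.
have prod_r_neq0 : \prod_(i < n) r i != 0.
  by apply: (big_ind (fun y => y != 0)); rewrite ?oner_eq0 //;
    [exact: semifield_mul_neq0 | move=> i _; case: (hr i)].
exists (\sum_(i < n) (g i).2); apply: (semifield_mulI hE prod_r_neq0).
have : \prod_(i < n) (x * r i) = \prod_(i < n) (r (g i).1 * f (Some (g i).2)).
  by apply: eq_bigr => i _; rewrite xrg.
rewrite !big_split /= prodr_const card_ord (reindex_inj g_inj) /=.
rewrite (big_morph (fun k => f (Some k)) rmorph_SomeD (rmorph1 f)).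
by rewrite mulrC.
Qed.

Lemma unit_index_root : (0 < n)%N -> exists2 s, L s & s ^+ n = f (Some 1).
Proof.
move=> n_gt0; have [[_ _ _ LM _] Lf] := hL; have [r [hr r_inj _]] := hU.
have /fin_all_exists [e re] : forall i, exists k, r i ^+ n = f (Some k).
  by move=> i; have [Lri ri0] := hr i; exact: unit_index_expr_image.
pose g i := Ordinal (residue_lt n_gt0 (e i)).
have g_inj : injective g.
  move=> i j /(congr1 val) /= /(residue_eq_dvd n_gt0) [q eij].
  apply: r_inj; exists q; apply: (expr_inj hE Zmax_one_add_one n_gt0).
    by apply: semifield_mul_neq0 (rmorph_Some_neq0 q); case: (hr j).
  by rewrite exprMn !re rmorph_SomeX eij rmorph_SomeD.
have /codomP [i /(congr1 val) /= /(residue_eq_dvd n_gt0) [q eiq]] :=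
  injF_onto g_inj (Ordinal (residue_lt n_gt0 1)).
exists (r i * f (Some q)); first by apply: LM (Lf _); case: (hr i).
by rewrite exprMn re rmorph_SomeX -rmorph_SomeD eiq.
Qed.

Lemma unit_index_mem_root (x : E) (k : int) :
  (0 < n)%N -> x ^+ n = f (Some k) -> L x.
Proof.
move=> n_gt0 xnk; have [s Ls sn1] := unit_index_root n_gt0.
pose y := s ^+ residue n k * f (Some (k %/ n)%Z).
have ynk : y ^+ n = f (Some k).
  rewrite exprMn -exprM mulnC exprM sn1 !rmorph_SomeX -rmorph_SomeD.
  by rewrite mul1r addrC -residue_divz_eq.
have y0 : y != 0.
  apply: contraNneq (rmorph_Some_neq0 k) => y0.
  by rewrite -ynk y0 expr0n gtn_eqF.
have -> : x = y by apply: (expr_inj hE Zmax_one_add_one n_gt0 y0); rewrite xnk.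
exact: subextension_exprM.
Qed.

End UnitIndex.

Lemma unit_index_subextension_sub (hE : is_semifield E) (n : nat)
    (L L' : E -> Prop) : (0 < n)%N ->
  is_subextension f L -> unit_index_eq f L n ->
  is_subextension f L' -> unit_index_eq f L' n ->
  forall x, L x -> L' x.
Proof.
move=> n_gt0 hL hU hL' hU' x Lx; have [[L'0 _ _ _ _] _] := hL'.
have [-> //|x0] := eqVneq x 0.
have [k xnk] := unit_index_expr_image hE hL hU Lx x0.
exact: (unit_index_mem_root hE hL' hU' n_gt0 xnk).
Qed.

End ZmaxExtension.

Theorem mainTheorem7 (E : comNzSemiRingType) (f : {rmorphism Zmax -> E})
    (hE : is_semifield E) (hf : injective f) (n : nat) (hn : (0 < n)%N)
    (L1 L2 : E -> Prop) :
  is_subextension f L1 -> unit_index_eq f L1 n ->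
  is_subextension f L2 -> unit_index_eq f L2 n ->
  forall x : E, L1 x <-> L2 x.
Proof.
move=> h1 u1 h2 u2 x; split.
  exact: (unit_index_subextension_sub hE hn h1 u1 h2 u2).
exact: (unit_index_subextension_sub hE hn h2 u2 h1 u1).
Qed.
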